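(* Consider two candidates $P,Q$. Let $A$ be the voters preferring $P$ (with strengths $\alpha_i=d(i,Q)/d(i,P)$) and $B$ the voters preferring $Q$ (with strengths $\beta_j=d(j,P)/d(j,Q)$). If $$\sum_{i\in A}\frac{\sqrt2\alpha_i-1}{\alpha_i+1}\ \ge\ \sum_{j\in B,\ \beta_j>\sqrt2}\frac{\beta_j-\sqrt2}{\beta_j-1}-\sum_{j\in B,\ \beta_j\le\sqrt2}\frac{\sqrt2-\beta_j}{\beta_j+1},$$ then $SC(P)\le\sqrt2\,SC(Q)$.
   Context: Voters $N=A\cup B$ and candidates $P,Q$ are points of an arbitrary metric space $(X,d)$, where $A=\{i: d(i,P)\le d(i,Q)\}$ and $B=N\setminus A$ consists of voters with $d(j,Q)<d(j,P)$ (or, more generally, a partition into voters preferring $P$ and voters preferring $Q$ consistent with the distances). $SC(Y)=\sum_{i\in N}d(i,Y)$. *)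

From Stdlib Require Import Reals Lra List.
Open Scope R_scope.

Definition is_metric {X : Type} (d : X -> X -> R) : Prop :=
  (forall x y, 0 <= d x y) /\
  (forall x y, d x y = 0 <-> x = y) /\
  (forall x y, d x y = d y x) /\
  (forall x y z, d x z <= d x y + d y z).

Definition Rsum (l : list R) : R := fold_right Rplus 0 l.

Definition bool_of {A B : Prop} (s : {A} + {B}) : bool := if s then true else false.

Definition SC {X : Type} (d : X -> X -> R) (N : list X) (Y : X) : R :=
  Rsum (map (fun i => d i Y) N).

Definition inA {X : Type} (d : X -> X -> R) (P Q : X) (i : X) : bool :=
  bool_of (Rle_dec (d i P) (d i Q)).
Definition inB {X : Type} (d : X -> X -> R) (P Q : X) (j : X) : bool :=
  negb (inA d P Q j).

(** Strengths alpha_i = d(i,Q)/d(i,P) and beta_j = d(j,P)/d(j,Q)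
    (meaningful when the denominators are positive). *)
Definition alpha {X : Type} (d : X -> X -> R) (P Q : X) (i : X) : R := d i Q / d i P.
Definition beta  {X : Type} (d : X -> X -> R) (P Q : X) (j : X) : R := d j P / d j Q.

(** Summand for i in A: (sqrt2 alpha_i - 1)/(alpha_i + 1); when d(i,P) = 0 the
    strength is alpha_i = +infinity and the summand is its limit sqrt 2. *)
Definition termA {X : Type} (d : X -> X -> R) (P Q : X) (i : X) : R :=
  if Rlt_dec 0 (d i P)
  then (sqrt 2 * alpha d P Q i - 1) / (alpha d P Q i + 1)
  else sqrt 2.

(** "beta_j > sqrt 2"; beta_j = +infinity when d(j,Q) = 0. *)
Definition beta_big {X : Type} (d : X -> X -> R) (P Q : X) (j : X) : bool :=
  if Rlt_dec 0 (d j Q) then bool_of (Rlt_dec (sqrt 2) (beta d P Q j)) else true.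

(** Summand (beta_j - sqrt2)/(beta_j - 1) for beta_j > sqrt 2; its value at
    beta_j = +infinity is the limit 1. *)
Definition termB_big {X : Type} (d : X -> X -> R) (P Q : X) (j : X) : R :=
  if Rlt_dec 0 (d j Q)
  then (beta d P Q j - sqrt 2) / (beta d P Q j - 1)
  else 1.

(** Summand (sqrt2 - beta_j)/(beta_j + 1) for beta_j <= sqrt 2 (finite there). *)
Definition termB_small {X : Type} (d : X -> X -> R) (P Q : X) (j : X) : R :=
  (sqrt 2 - beta d P Q j) / (beta d P Q j + 1).

From Stdlib Require Import Reals List Bool Lra.
Open Scope R_scope.

(* Write s = sqrt 2 and D = d(P,Q).  Every voter i contributes
   d(i,P) - s d(i,Q) to SC(P) - s SC(Q), and the triangle inequality bounds
   this contribution by D times a signed coefficient c(i):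
     - i in A:            c(i) = -(s alpha_i - 1)/(alpha_i + 1),  using D <= d(i,P) + d(i,Q);
     - i in B, beta > s:  c(i) =  (beta_j - s)/(beta_j - 1),      using d(i,P) - d(i,Q) <= D;
     - i in B, beta <= s: c(i) = -(s - beta_j)/(beta_j + 1),      using D <= d(i,P) + d(i,Q).
   After clearing the ratios each summand has the form x/y with x >= 0, and the
   bound is just "x/y scaled by D instead of y" (lemmas [scale_le_down] and
   [scale_le_up]).  Summing over the voters, SC(P) - s SC(Q) <= D * sum c(i),
   and sum c(i) is exactly the right-hand side minus the left-hand side of the
   hypothesis, hence nonpositive. *)

Lemma sqrt2_gt_1 : 1 < sqrt 2.
Proof. rewrite <- sqrt_1; apply sqrt_lt_1; lra. Qed.

Lemma scale_le_down (x y D : R) :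
  0 <= x -> 0 < y -> D <= y -> - x <= D * - (x / y).
Proof.
  intros Hx Hy HD.
  assert (Hxy : 0 <= x / y) by (apply Rle_mult_inv_pos; lra).
  replace (- x) with (- (y * (x / y))) by (field; lra).
  nra.
Qed.

Lemma scale_le_up (x y D : R) :
  0 <= x -> 0 < y -> y <= D -> x <= D * (x / y).
Proof.
  intros Hx Hy HD.
  assert (Hxy : 0 <= x / y) by (apply Rle_mult_inv_pos; lra).
  replace x with (y * (x / y)) at 1 by (field; lra).
  nra.
Qed.

Lemma termA_homogeneous (s a b : R) :
  0 < a -> 0 <= b -> (s * (b / a) - 1) / (b / a + 1) = (s * b - a) / (a + b).
Proof. intros. field; lra. Qed.

Lemma termB_big_homogeneous (s a b : R) :
  0 < b -> b < a -> (a / b - s) / (a / b - 1) = (a - s * b) / (a - b).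
Proof. intros. field; lra. Qed.

Lemma termB_small_homogeneous (s a b : R) :
  0 < b -> 0 <= a -> (s - a / b) / (a / b + 1) = (s * b - a) / (a + b).
Proof. intros. field; lra. Qed.

Definition voter_coef {X : Type} (d : X -> X -> R) (P Q : X) (i : X) : R :=
  if inA d P Q i then - termA d P Q i
  else if beta_big d P Q i then termB_big d P Q i else - termB_small d P Q i.

Lemma voter_bound {X : Type} (d : X -> X -> R) (P Q : X) (i : X) :
  is_metric d -> d i P - sqrt 2 * d i Q <= d P Q * voter_coef d P Q i.
Proof.
  intros [Hnn [_ [Hsym Htri]]].
  pose proof sqrt2_gt_1 as Hs.
  assert (Hsum : d P Q <= d i P + d i Q) by (rewrite (Hsym i P); apply Htri).
  assert (Hdiff : d i P <= d P Q + d i Q)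
    by (pose proof (Htri i Q P); rewrite (Hsym Q P) in *; lra).
  pose proof (Hnn i P) as Ha; pose proof (Hnn i Q) as Hb.
  unfold voter_coef, inA, bool_of, termA, beta_big, termB_big, termB_small,
    alpha, beta.
  set (s := sqrt 2) in *; set (a := d i P) in *; set (b := d i Q) in *.
  destruct (Rle_dec a b) as [Hab | Hab].
  - destruct (Rlt_dec 0 a) as [Ha0 | Ha0].
    + rewrite termA_homogeneous by lra.
      replace (a - s * b) with (- (s * b - a)) by ring.
      apply scale_le_down; nra.
    + replace a with 0 in * by lra. nra.
  - destruct (Rlt_dec 0 b) as [Hb0 | Hb0].
    + assert (Hbeta : a / b * b = a) by (field; lra).
      destruct (Rlt_dec s (a / b)) as [Hbig | Hsmall]; simpl.
      * rewrite termB_big_homogeneous by lra.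
        apply scale_le_up; nra.
      * rewrite termB_small_homogeneous by lra.
        replace (a - s * b) with (- (s * b - a)) by ring.
        apply scale_le_down; nra.
    + simpl. replace b with 0 in * by lra. lra.
Qed.

Lemma Rsum_map_le {X : Type} (f g : X -> R) (l : list X) :
  (forall x, f x <= g x) -> Rsum (map f l) <= Rsum (map g l).
Proof.
  intros Hfg; induction l as [|x l IH]; simpl; [lra|].
  pose proof (Hfg x); lra.
Qed.

Lemma Rsum_map_scale {X : Type} (c : R) (f : X -> R) (l : list X) :
  Rsum (map (fun x => c * f x) l) = c * Rsum (map f l).
Proof. induction l as [|x l IH]; simpl; [ring|]. rewrite IH; ring. Qed.

Lemma SC_sub_scaled {X : Type} (d : X -> X -> R) (N : list X) (P Q : X) (c : R) :
  SC d N P - c * SC d N Q = Rsum (map (fun i => d i P - c * d i Q) N).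
Proof. unfold SC; induction N as [|x N IH]; simpl; [ring|]. rewrite <- IH; ring. Qed.

Lemma Rsum_voter_coef {X : Type} (d : X -> X -> R) (P Q : X) (N : list X) :
  Rsum (map (voter_coef d P Q) N)
  = Rsum (map (termB_big d P Q)
             (filter (fun j => inB d P Q j && beta_big d P Q j) N))
    - Rsum (map (termB_small d P Q)
             (filter (fun j => inB d P Q j && negb (beta_big d P Q j)) N))
    - Rsum (map (termA d P Q) (filter (inA d P Q) N)).
Proof.
  induction N as [|x N IH]; simpl; [ring|].
  rewrite IH; unfold voter_coef, inB.
  destruct (inA d P Q x), (beta_big d P Q x); simpl; ring.
Qed.

Theorem mainTheorem11 (X : Type) (d : X -> X -> R) (N : list X) (P Q : X)
  (Hd : is_metric d)
  (Hcond :
     Rsum (map (termA d P Q) (filter (inA d P Q) N))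
     >= Rsum (map (termB_big d P Q)
                (filter (fun j => inB d P Q j && beta_big d P Q j) N))
        - Rsum (map (termB_small d P Q)
                (filter (fun j => inB d P Q j && negb (beta_big d P Q j)) N))) :
  SC d N P <= sqrt 2 * SC d N Q.
Proof.
  assert (HD : 0 <= d P Q) by (destruct Hd as [Hnn _]; apply Hnn).
  assert (Hbound : SC d N P - sqrt 2 * SC d N Q
                   <= d P Q * Rsum (map (voter_coef d P Q) N)).
  { rewrite SC_sub_scaled, <- Rsum_map_scale.
    apply Rsum_map_le; intro i; apply voter_bound, Hd. }
  assert (Hcoef : Rsum (map (voter_coef d P Q) N) <= 0)
    by (rewrite Rsum_voter_coef; lra).
  assert (Hprod : d P Q * Rsum (map (voter_coef d P Q) N) <= 0).
  { rewrite <- (Rmult_0_r (d P Q)); apply Rmult_le_compat_l; assumption. }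
  lra.
Qed.
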